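(* Let $a\in\mathbb F^*$ and let $g,h\in\mathcal R$ satisfy $x^n-a=hg$, and let $\widehat h^{l}=\rho_l(\theta^{-n}(h))$. Then $$M^\theta_a(\overline g)\,M^\theta_c(\overline{a^{-1}h})=M^\theta_a(\overline g)\,M^\theta_{a^{-1}}(\overline{\widehat h^{l}})^{\mathsf T}=0,\qquad\text{where } c=\gamma(a,g).$$
   Context: $\mathbb F$ is a finite field, $\theta\in\mathrm{Aut}(\mathbb F)$, $\mathcal R=\mathbb F[x;\theta]$ the skew polynomial ring (elements $\sum f_ix^i$ with left coefficients, $xb=\theta(b)x$). Integer powers of $\theta$ act on $\mathcal R$ coefficientwise. Fix $n\in\mathbb N$. For $b\in\mathbb F^*$, $\mathcal S_b=\mathcal R/\mathcal R(x^n-b)$, $\overline f$ is the coset of $f$ (in $M^\theta_b(\overline f)$ taken in $\mathcal S_b$), $\mathfrak v_b:\mathcal S_b\to\mathbb F^n$ the inverse of $(c_0,\dots,c_{n-1})\mapsto\overline{\sum_{i=0}^{n-1}c_ix^i}$. $M^\theta_b(\overline f)$ is the $n\times n$ matrix whose row with index $i$ ($0\le i\le n-1$) is $\mathfrak v_b(\overline{x^if})$. For a right divisor $g=\sum g_ix^i$ of $x^n-a$, $\gamma(a,g)=ag_0^{-1}\theta^n(g_0)$. For nonzero $f=\sum_{i=0}^tf_ix^i$ with $f_t\neq0$, $\rho_l(f)=\sum_{i=0}^t\theta^i(f_{t-i})x^i$. *)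

From HB Require Import structures.
From mathcomp Require Import all_boot all_order all_algebra all_field.
Set Implicit Arguments. Unset Strict Implicit. Unset Printing Implicit Defensive.
Import GRing.Theory.
Local Open Scope ring_scope.

(* Skew polynomial ring F[x; theta]: elements sum f_i x^i (left coefficients)
   are represented by their coefficient sequences, i.e. by {poly F} viewed only
   as an additive group; the multiplication is the skew one, x b = theta(b) x. *)
Section Skew.
Variable F : finFieldType.
Variable theta : {rmorphism F -> F}.

(* theta^{-1} (theta is bijective since F is finite) *)
Definition theta_inv : F -> F := invF (fmorph_inj theta).

Definition skmul (p q : {poly F}) : {poly F} :=
  \poly_(k < (size p + size q).-1) \sum_(i < k.+1) p`_i * iter i theta (q`_(k - i)).

Definition theta_pow (m : nat) (p : {poly F}) : {poly F} := map_poly (iter m theta) p.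
Definition theta_invpow (m : nat) (p : {poly F}) : {poly F} := map_poly (iter m theta_inv) p.

(* One step of right division by the monic d: cancel the leading term of f
   by subtracting (lc(f) x^(deg f - deg d)) * d. *)
Definition rmod_step (d f : {poly F}) : {poly F} :=
  if (size f < size d)%N then f
  else f - skmul ((lead_coef f)%:P * 'X^(size f - size d)) d.

(* Right remainder of f modulo d, i.e. the representative of degree < deg d
   of the coset of f in R / R d. *)
Definition rmod (d f : {poly F}) : {poly F} := iter (size f) (rmod_step d) f.

(* v_b(\bar f) : coefficient vector (c_0..c_{n-1}) of the reduced representative
   of f in S_b = R / R (x^n - b). *)
Definition vb (n : nat) (b : F) (f : {poly F}) : 'rV[F]_n :=
  \row_(j < n) (rmod ('X^n - b%:P) f)`_j.

Definition Mtheta (n : nat) (b : F) (f : {poly F}) : 'M[F]_n :=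
  \matrix_(i < n) vb n b (skmul 'X^i f).

Definition gamma (n : nat) (a : F) (g : {poly F}) : F :=
  a * (g`_0)^-1 * iter n theta (g`_0).

Definition rho_l (f : {poly F}) : {poly F} :=
  \poly_(i < size f) iter i theta (f`_((size f).-1 - i)).

End Skew.

From HB Require Import structures.
From mathcomp Require Import all_boot all_order all_algebra all_field.
From mathcomp Require Import zify.
Set Implicit Arguments. Unset Strict Implicit. Unset Printing Implicit Defensive.
Import GRing.Theory.
Local Open Scope ring_scope.

(* Put k = a^-1 h and c = gamma(a, g).  From h g = x^n - a one gets
   (g k + 1) g = g a^-1 x^n; since g_0 <> 0 and the right-hand side has no
   term of degree < n, comparing coefficients forces g k = c^-1 (x^n - c).
   Row i of M_a(g) is the remainder x^i g - q (x^n - a) = (x^i - q h) g, and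
   multiplying it by M_c(k) computes the remainder of (x^i - q h) g k, a left
   multiple of x^n - c; hence M_a(g) M_c(k) = 0.  On the other side, the
   explicit entries of M_b(f) for deg f <= n show that M_{a^-1}(hhat)^T is
   M_c(k) with its columns permuted by j |-> j + deg h (mod n) and rescaled,
   so M_a(g) M_{a^-1}(hhat)^T = 0 too. *)

Lemma iterC T (f : T -> T) i j x : iter i f (iter j f x) = iter j f (iter i f x).
Proof. by rewrite -!iterD addnC. Qed.

Section IterRMorphism.
Variables (R : pzRingType) (f : {rmorphism R -> R}).

Lemma iter_rmorph0 i : iter i f 0 = 0.
Proof. by elim: i => //= i ->; rewrite rmorph0. Qed.

Lemma iter_rmorph1 i : iter i f 1 = 1.
Proof. by elim: i => //= i ->; rewrite rmorph1. Qed.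

Lemma iter_rmorphD i x y : iter i f (x + y) = iter i f x + iter i f y.
Proof. by elim: i => //= i ->; rewrite rmorphD. Qed.

Lemma iter_rmorphB i x y : iter i f (x - y) = iter i f x - iter i f y.
Proof. by elim: i => //= i ->; rewrite rmorphB. Qed.

Lemma iter_rmorphM i x y : iter i f (x * y) = iter i f x * iter i f y.
Proof. by elim: i => //= i ->; rewrite rmorphM. Qed.

End IterRMorphism.

Section IterFMorphism.
Variables (K : fieldType) (f : {rmorphism K -> K}).

Lemma iter_fmorph_inj i : injective (iter i f).
Proof. by elim: i => //= i IH x y /fmorph_inj /IH. Qed.

Lemma iter_fmorph_eq0 i x : (iter i f x == 0) = (x == 0).
Proof. by rewrite -(inj_eq (@iter_fmorph_inj i) x 0) iter_rmorph0. Qed.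

Lemma iter_fmorphV i x : iter i f x^-1 = (iter i f x)^-1.
Proof. by elim: i => //= i ->; rewrite fmorphV. Qed.

End IterFMorphism.

Section SkewPolynomials.
Variables (F : finFieldType) (theta : {rmorphism F -> F}).
Local Notation th i := (iter i theta).
Local Notation thinv i := (iter i (theta_inv theta)).
Local Notation "p ** q" := (skmul theta p q) (at level 40, left associativity).
Implicit Types (f p q r u : {poly F}) (b c : F).

Lemma iter_theta_invK i x : th i (thinv i x) = x.
Proof. by elim: i x => // i IH x; rewrite iterSr iterS /theta_inv f_invF IH. Qed.

Lemma iter_theta_inv_eq0 i x : (thinv i x == 0) = (x == 0).
Proof. by rewrite -(iter_fmorph_eq0 theta i) iter_theta_invK. Qed.

Lemma size_theta_invpow i p : size (theta_invpow theta i p) = size p.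
Proof.
have [->|p0] := eqVneq p 0; first by rewrite /theta_invpow map_poly0.
by rewrite size_map_poly_id0 // iter_theta_inv_eq0 lead_coef_eq0.
Qed.

Lemma coef_theta_invpow i p k : (theta_invpow theta i p)`_k = thinv i p`_k.
Proof. by rewrite coef_map_id0 //; apply/eqP; rewrite iter_theta_inv_eq0. Qed.

Lemma coef_skmul p q k : (p ** q)`_k = \sum_(i < k.+1) p`_i * th i q`_(k - i).
Proof.
rewrite coef_poly; case: ltnP => // hk; symmetry; apply: big1 => i _.
case: (ltnP i (size p)) => hi; last by rewrite nth_default ?mul0r.
by rewrite (nth_default _ (_ : size q <= k - i)%N) ?iter_rmorph0 ?mulr0 //; lia.
Qed.

Lemma coef0_skmul p q : (p ** q)`_0 = p`_0 * q`_0.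
Proof. by rewrite coef_skmul big_ord1. Qed.

Lemma skmulDl p1 p2 q : (p1 + p2) ** q = p1 ** q + p2 ** q.
Proof.
apply/polyP => k; rewrite coefD !coef_skmul -big_split.
by apply: eq_bigr => i _; rewrite coefD mulrDl.
Qed.

Lemma skmulDr p q1 q2 : p ** (q1 + q2) = p ** q1 + p ** q2.
Proof.
apply/polyP => k; rewrite coefD !coef_skmul -big_split.
by apply: eq_bigr => i _; rewrite coefD iter_rmorphD mulrDr.
Qed.

Lemma skmulBl p1 p2 q : (p1 - p2) ** q = p1 ** q - p2 ** q.
Proof.
apply/polyP => k; rewrite coefB !coef_skmul -sumrB.
by apply: eq_bigr => i _; rewrite coefB mulrBl.
Qed.

Lemma skmulBr p q1 q2 : p ** (q1 - q2) = p ** q1 - p ** q2.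
Proof.
apply/polyP => k; rewrite coefB !coef_skmul -sumrB.
by apply: eq_bigr => i _; rewrite coefB iter_rmorphB mulrBr.
Qed.

Lemma skmulZl c p q : (c *: p) ** q = c *: (p ** q).
Proof.
apply/polyP => k; rewrite coefZ !coef_skmul mulr_sumr.
by apply: eq_bigr => i _; rewrite coefZ mulrA.
Qed.

Lemma skmul0l q : 0 ** q = 0.
Proof.
by apply/polyP => k; rewrite coef_skmul coef0 big1 // => i _; rewrite coef0 mul0r.
Qed.

Lemma skmul0r p : p ** 0 = 0.
Proof.
by apply/polyP => k; rewrite coef_skmul coef0 big1 // => i _; rewrite coef0 iter_rmorph0 mulr0.
Qed.

Lemma skmul_suml I (r : seq I) (P : pred I) (f : I -> {poly F}) q :
  (\sum_(i <- r | P i) f i) ** q = \sum_(i <- r | P i) f i ** q.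
Proof.
exact: (big_morph (skmul theta ^~ q) (fun p1 p2 => skmulDl p1 p2 q) (skmul0l q)).
Qed.

Lemma skmul_sumr I (r : seq I) (P : pred I) (f : I -> {poly F}) p :
  p ** (\sum_(i <- r | P i) f i) = \sum_(i <- r | P i) p ** f i.
Proof. exact: (big_morph (skmul theta p) (skmulDr p) (skmul0r p)). Qed.

Lemma coef_skmulXnl c i q k :
  ((c *: 'X^i) ** q)`_k = if (i <= k)%N then c * th i q`_(k - i) else 0.
Proof.
rewrite coef_skmul (eq_bigr (fun j : 'I_k.+1 =>
  if j == i :> nat then c * th i q`_(k - i) else 0)); last first.
  move=> j _; rewrite coefZ coefXn.
  by case: eqP => [->|_]; rewrite ?mulr1 ?mulr0 ?mul0r.
by rewrite -big_mkcond (big_ord1_eq _ (fun=> c * th i q`_(k - i))) ltnS.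
Qed.

Lemma coef_skmulXnr p c i k :
  (p ** (c *: 'X^i))`_k = if (i <= k)%N then p`_(k - i) * th (k - i) c else 0.
Proof.
rewrite coef_skmul; case: leqP => hik; last first.
  apply: big1 => j _; rewrite coefZ coefXn (_ : (k - j == i)%N = false) //.
    by rewrite mulr0 iter_rmorph0 mulr0.
  by have := ltn_ord j; lia.
rewrite (eq_bigr (fun j : 'I_k.+1 =>
  if j == (k - i)%N :> nat then p`_(k - i) * th (k - i) c else 0)).
  rewrite -big_mkcond (big_ord1_eq _ (fun=> p`_(k - i) * th (k - i) c)).
  by rewrite ltnS leq_subr.
move=> j _; rewrite coefZ coefXn (_ : (k - j == i)%N = (j == (k - i)%N :> nat)).
  by case: eqP => [->|_]; rewrite ?mulr1 ?mulr0 ?iter_rmorph0 ?mulr0.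
by have := ltn_ord j; lia.
Qed.

Lemma skmul_monomial c i b j : (c *: 'X^i) ** (b *: 'X^j) = (c * th i b) *: 'X^(i + j).
Proof.
apply/polyP => k; rewrite coef_skmulXnl !coefZ !coefXn.
have [-> | hk] := eqVneq k (i + j); first by rewrite leq_addr addKn eqxx !mulr1.
case: leqP => hik; last by rewrite mulr0.
by rewrite (_ : (k - i == j)%N = false) ?mulr0 ?iter_rmorph0 ?mulr0 //; lia.
Qed.

Lemma skmulA p q r : p ** (q ** r) = p ** q ** r.
Proof.
rewrite -[p]coefK poly_def !(skmul_suml, skmul_sumr); apply: eq_bigr => i _.
rewrite -[q]coefK poly_def !(skmul_suml, skmul_sumr); apply: eq_bigr => j _.
rewrite -[r]coefK poly_def !(skmul_suml, skmul_sumr); apply: eq_bigr => l _.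
by rewrite !skmul_monomial iter_rmorphM -iterD !mulrA addnA.
Qed.

Lemma polyC_scaleXn0 (c : F) : c%:P = c *: 'X^0.
Proof. by rewrite expr0 -alg_polyC. Qed.

Lemma skmulCl c q : c%:P ** q = c *: q.
Proof. by apply/polyP => k; rewrite polyC_scaleXn0 coef_skmulXnl subn0 coefZ. Qed.

Lemma coef_skmulCr p c k : (p ** c%:P)`_k = p`_k * th k c.
Proof. by rewrite polyC_scaleXn0 coef_skmulXnr subn0. Qed.

Lemma skmul1l q : 1 ** q = q.
Proof. by rewrite -polyC1 skmulCl scale1r. Qed.

Lemma skmul1r p : p ** 1 = p.
Proof. by apply/polyP => k; rewrite -polyC1 coef_skmulCr iter_rmorph1 mulr1. Qed.

Lemma size_skmul_leq p q : (size (p ** q) <= (size p + size q).-1)%N.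
Proof. exact: size_poly. Qed.

Lemma coef_skmul_lead p q :
  (p ** q)`_((size p).-1 + (size q).-1) = lead_coef p * th (size p).-1 (lead_coef q).
Proof.
have hi : ((size p).-1 < ((size p).-1 + (size q).-1).+1)%N by lia.
rewrite coef_skmul (bigD1 (Ordinal hi)) //= addKn big1 ?addr0 // => j hj.
have {}hj : (j : nat) != (size p).-1 by apply: contraNneq hj => e; apply/eqP/val_inj.
case: (ltnP j (size p)) => hjp; last by rewrite nth_default ?mul0r.
rewrite (nth_default _ (_ : size q <= _)%N) ?iter_rmorph0 ?mulr0 //.
(* The [size] terms here are elaborated at convertible but syntactically
   different types, which [lia] would take for distinct atoms: generalizing
   them first identifies them. *)
move/eqP: hj hjp; move: (nat_of_ord j) => jj; clear.
by move: (size p) (size q) => sp sq; lia.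
Qed.

Lemma size_skmul p q : p != 0 -> q != 0 -> size (p ** q) = (size p + size q).-1.
Proof.
rewrite -!size_poly_gt0 => p0 q0; apply/eqP; rewrite eqn_leq size_skmul_leq /=.
have : (p ** q)`_((size p).-1 + (size q).-1) != 0.
  by rewrite coef_skmul_lead mulf_neq0 ?iter_fmorph_eq0 ?lead_coef_eq0 -?size_poly_gt0.
apply: contraR; rewrite -ltnNge => hs; rewrite nth_default //.
by move: hs p0 q0; move: (size (p ** q)) (size p) (size q) => s sp sq; lia.
Qed.

Lemma skmul_eq_scaleXn u q b m : q`_0 != 0 -> (size u <= m.+1)%N ->
  u ** q = q ** (b *: 'X^m) -> u = (q`_0 * b / th m q`_0) *: 'X^m.
Proof.
move=> q0 su E.
have coefE j : \sum_(i < j) u`_i * th i q`_(j - i) + u`_j * th j q`_0 =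
    if (m <= j)%N then q`_(j - m) * th (j - m) b else 0.
  by rewrite -coef_skmulXnr -E coef_skmul big_ord_recr subnn.
have u_lt j : (j < m)%N -> u`_j = 0.
  elim/ltn_ind: j => j IH hj; move: (coefE j).
  rewrite big1 => [|i _]; last by rewrite IH ?mul0r //; apply: ltn_trans hj.
  rewrite add0r leqNgt hj => /eqP; rewrite mulf_eq0 iter_fmorph_eq0 (negbTE q0).
  by rewrite orbF => /eqP.
have u_m : u`_m * th m q`_0 = q`_0 * b.
  move: (coefE m); rewrite big1 => [|i _]; last by rewrite u_lt ?mul0r.
  by rewrite add0r leqnn subnn.
apply/polyP => j; rewrite coefZ coefXn.
case: (ltngtP j m) => [hj | hj | ->].
- by rewrite u_lt // mulr0.
- by rewrite nth_default ?mulr0 //; apply: leq_trans hj.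
- by rewrite -u_m mulfK ?mulr1 // iter_fmorph_eq0.
Qed.

Section RightRemainder.
Variable d : {poly F}.
Hypothesis d_monic : d \is monic.

Lemma rmod_step_coset f : exists q, f = rmod_step theta d f + q ** d.
Proof.
rewrite /rmod_step; case: ifP => _; first by exists 0; rewrite skmul0l addr0.
by exists ((lead_coef f)%:P * 'X^(size f - size d)); rewrite subrK.
Qed.

Lemma size_rmod_step f : (size d <= size f)%N ->
  (size (rmod_step theta d f) < size f)%N.
Proof.
move=> hdf; rewrite /rmod_step; case: (ltnP (size f) (size d)) => [hfd | _].
  by move: hfd hdf; move: (size f) (size d) => sf sd; lia.
have d_gt0 : (0 < size d)%N by rewrite size_poly_gt0 monic_neq0.
apply: (@leq_ltn_trans (size f).-1); last by rewrite prednK //; apply: leq_trans hdf.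
apply/leq_sizeP => k hk; rewrite coefB mul_polyC coef_skmulXnl.
rewrite ifT; last by move: hk hdf d_gt0; move: (size f) (size d) => sf sd; lia.
case: (ltnP k (size f)) => hkf.
  have -> : k = (size f).-1 by lia.
  rewrite (_ : (size f).-1 - (size f - size d) = (size d).-1)%N; last by lia.
  by rewrite -!lead_coefE (monicP d_monic) iter_rmorph1 mulr1 subrr.
rewrite !nth_default ?iter_rmorph0 ?mulr0 ?subr0 //.
by move: hkf hdf; move: (size f) (size d) => sf sd; lia.
Qed.

Lemma rmod_coset f : exists q, f = rmod theta d f + q ** d.
Proof.
rewrite /rmod; elim: (size f) => [|m [q Eq]] /=; first by exists 0; rewrite skmul0l addr0.
have [q' Eq'] := rmod_step_coset (iter m (rmod_step theta d) f).
by exists (q' + q); rewrite skmulDl addrA -Eq'.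
Qed.

Lemma size_rmod f : (size (rmod theta d f) < size d)%N.
Proof.
suff /(_ (size f)) [//|] : forall m, let u := iter m (rmod_step theta d) f in
    (size u < size d)%N \/ (size u + m <= size f)%N.
  rewrite /rmod -[X in (_ <= X)%N]add0n leq_add2r leqn0 => /eqP ->.
  by rewrite size_poly_gt0 monic_neq0.
elim=> [|m IH] /=; first by right; rewrite addn0.
set u := iter m _ f in IH *.
have [small | big] := ltnP (size u) (size d).
  by left; rewrite /rmod_step small.
case: IH => [|IH]; first by rewrite ltnNge big.
right; move: IH (size_rmod_step big).
by move: (size (rmod_step theta d u)) (size u) (size f) => s1 s0 sf; lia.
Qed.

Lemma rmod_eq f r q : f = r + q ** d -> (size r < size d)%N -> rmod theta d f = r.
Proof.
move=> Ef hr; have [q' Ef'] := rmod_coset f.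
have E : rmod theta d f - r = (q - q') ** d.
  rewrite skmulBl -[rmod _ _ _](addrK (q' ** d)) -Ef' {1}Ef.
  by rewrite addrAC [r + _]addrC addrK.
have [qq' | qq'] := eqVneq (q - q') 0.
  by apply/eqP; rewrite -subr_eq0 E qq' skmul0l.
have : (size ((q - q') ** d) < size d)%N.
  rewrite -E (leq_ltn_trans (size_polyD _ _)) // size_polyN gtn_max hr andbT.
  exact: size_rmod.
rewrite size_skmul ?(monic_neq0 d_monic) //.
have := size_poly_gt0 (q - q'); rewrite qq'.
by move: (size (q - q')) (size d) => s sd; lia.
Qed.

Lemma rmodD f1 f2 : rmod theta d (f1 + f2) = rmod theta d f1 + rmod theta d f2.
Proof.
have [q1 E1] := rmod_coset f1; have [q2 E2] := rmod_coset f2.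
apply: (@rmod_eq _ _ (q1 + q2)); first by rewrite skmulDl {1}E1 {1}E2 addrACA.
by rewrite (leq_ltn_trans (size_polyD _ _)) // gtn_max !size_rmod.
Qed.

Lemma rmodZ c f : rmod theta d (c *: f) = c *: rmod theta d f.
Proof.
have [q E] := rmod_coset f.
apply: (@rmod_eq _ _ (c *: q)); first by rewrite skmulZl {1}E scalerDr.
exact: leq_ltn_trans (size_scale_leq _ _) (size_rmod _).
Qed.

Lemma rmod_skmul q : rmod theta d (q ** d) = 0.
Proof.
by apply: (@rmod_eq _ _ q); rewrite ?add0r ?size_poly0 ?size_poly_gt0 ?monic_neq0.
Qed.

Lemma rmod_sum I (r : seq I) (P : pred I) (f : I -> {poly F}) :
  rmod theta d (\sum_(i <- r | P i) f i) = \sum_(i <- r | P i) rmod theta d (f i).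
Proof.
have rmod0 : rmod theta d 0 = 0 by have := rmod_skmul 0; rewrite skmul0l.
exact: (big_morph _ rmodD rmod0).
Qed.

End RightRemainder.

Section ReductionModXnsubC.
Variable n : nat.
Hypothesis n_gt0 : (0 < n)%N.

Lemma rmod_XnsubC b f : (size f <= n + n)%N ->
  rmod theta ('X^n - b%:P) f = \poly_(m < n) (f`_m + f`_(m + n) * th m b).
Proof.
move=> hf.
apply: (rmod_eq (monicXnsubC b n_gt0) (q := \poly_(m < n) f`_(m + n))); last first.
  by rewrite size_XnsubC // ltnS size_poly.
apply/polyP => m; rewrite coefD skmulBr coefB coef_skmulCr -[X in _ ** X]scale1r.
rewrite coef_skmulXnr iter_rmorph1 mulr1 !coef_poly.
case: (ltnP m n) => hm; first by rewrite sub0r addrK.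
rewrite add0r mul0r subr0; case: ltnP => hmn; first by rewrite subnK.
by rewrite nth_default //; move: hf; move: (size f) => sf; lia.
Qed.

Lemma Mtheta_entryE b f (i j : 'I_n) :
  Mtheta theta n b f i j = (rmod theta ('X^n - b%:P) ('X^i ** f))`_j.
Proof. by rewrite !mxE. Qed.

Lemma Mtheta_entry b f (i j : 'I_n) : (size f <= n.+1)%N ->
  Mtheta theta n b f i j =
  (if (i <= j)%N then th i f`_(j - i) else 0) + th i f`_(j + n - i) * th j b.
Proof.
move=> hf; rewrite Mtheta_entryE rmod_XnsubC; last first.
  apply: leq_trans (size_skmul_leq _ _) _; rewrite size_polyXn.
  by have := ltn_ord i; move: hf; move: (size f) => sf; lia.
rewrite coef_poly ltn_ord -['X^i]scale1r !coef_skmulXnl !mul1r.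
by rewrite (_ : (i <= j + n)%N); last by have := ltn_ord i; lia.
Qed.

Lemma sum_row_Mtheta b f r (j : 'I_n) : (size r <= n)%N ->
  \sum_(l < n) r`_l * Mtheta theta n b f l j = (rmod theta ('X^n - b%:P) (r ** f))`_j.
Proof.
move=> hr; rewrite -{2}(take_poly_id hr) /take_poly poly_def skmul_suml.
rewrite rmod_sum ?monicXnsubC // coef_sum; apply: eq_bigr => l _.
by rewrite skmulZl rmodZ ?monicXnsubC // coefZ Mtheta_entryE.
Qed.

End ReductionModXnsubC.

Section Factorization.
Variables (n : nat) (a : F) (g h : {poly F}).
Hypotheses (n_gt0 : (0 < n)%N) (a_neq0 : a != 0) (hg : 'X^n - a%:P = h ** g).
Local Notation c := (gamma theta n a g).
Local Notation k := (a^-1%:P ** h).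

Lemma coef0_rfactor_neq0 : g`_0 != 0.
Proof.
apply: contraNneq a_neq0 => g0; move: (coef0_skmul h g).
rewrite -hg g0 mulr0 coefB coefXn coefC eqxx (ltn_eqF n_gt0) sub0r.
by move/eqP; rewrite oppr_eq0.
Qed.

Lemma lfactor_neq0 : h != 0.
Proof.
apply/eqP => h0; move: (lead_coefXnsubC a n_gt0).
by rewrite hg h0 skmul0l lead_coef0 => /eqP; rewrite eq_sym oner_eq0.
Qed.

Lemma size_factors : (size h + size g).-1 = n.+1.
Proof.
rewrite -size_skmul ?lfactor_neq0 // -?hg ?size_XnsubC //.
by apply: contraNneq coef0_rfactor_neq0 => ->; rewrite coef0.
Qed.

Lemma size_lfactor_leq : (size h <= n.+1)%N.
Proof.
have := size_factors; have : (0 < size g)%N.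
  by rewrite size_poly_gt0; apply: contraNneq coef0_rfactor_neq0 => ->; rewrite coef0.
by move: (size g) (size h) => sg sh; lia.
Qed.

Lemma gamma_neq0 : c != 0.
Proof. by rewrite /gamma !mulf_neq0 ?invr_eq0 ?iter_fmorph_eq0 ?coef0_rfactor_neq0. Qed.

Lemma skmul_rfactor_ainv_lfactor : g ** k = c^-1 *: ('X^n - c%:P).
Proof.
set w := g ** k.
have wg : (w + 1) ** g = g ** (a^-1 *: 'X^n).
  rewrite skmulDl skmul1l /w -!skmulA -hg skmulCl scalerBr scale_polyC mulVf // polyC1.
  by rewrite skmulBr skmul1r subrK.
have size_w1 : (size (w + 1)%R <= n.+1)%N.
  rewrite (leq_trans (size_polyD _ _)) // geq_max size_poly1 andbT.
  rewrite (leq_trans (size_skmul_leq _ _)) // skmulCl size_scale ?invr_eq0 //.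
  by rewrite addnC size_factors.
rewrite -[w](addrK 1) (skmul_eq_scaleXn coef0_rfactor_neq0 size_w1 wg).
rewrite scalerBr scale_polyC mulVf ?gamma_neq0 // polyC1 /gamma.
by rewrite !invfM invrK [a^-1 * _]mulrC.
Qed.

Lemma iter_ainv_coef_lfactor i : th n (a^-1 * h`_i) = h`_i * th i c^-1.
Proof.
have Xn_k : 'X^n ** k = h ** (c^-1 *: 'X^n).
  have := skmulA h g k; rewrite skmul_rfactor_ainv_lfactor -hg scalerBr scale_polyC.
  rewrite mulVf ?gamma_neq0 // polyC1 skmulBr skmul1r skmulBl skmulA skmulCl skmulCl.
  by rewrite scalerA mulfV // scale1r => /subIr.
move/(congr1 (fun p => p`_(i + n))): Xn_k.
rewrite -[X in X ** _]scale1r coef_skmulXnl coef_skmulXnr leq_addl addnK mul1r.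
by rewrite skmulCl coefZ.
Qed.

Lemma Mtheta_rfactor_mul_eq0 : Mtheta theta n a g *m Mtheta theta n c k = 0.
Proof.
apply/matrixP => i j; rewrite mxE [RHS]mxE.
under eq_bigr => l _ do rewrite [Mtheta _ _ a _ _ _]Mtheta_entryE.
rewrite (sum_row_Mtheta n_gt0); last first.
  by rewrite -ltnS -(size_XnsubC a n_gt0) size_rmod ?monicXnsubC.
have [q Eq] := rmod_coset ('X^n - a%:P) ('X^i ** g).
have -> : rmod theta ('X^n - a%:P) ('X^i ** g) = ('X^i - q ** h) ** g.
  by rewrite skmulBl -skmulA -hg {2}Eq addrK.
by rewrite -skmulA skmul_rfactor_ainv_lfactor -skmulCl skmulA rmod_skmul ?coef0 // monicXnsubC.
Qed.

Section Reversal.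
Variable t : nat.
Hypothesis size_h : size h = t.+1.
Local Notation hhat := (rho_l theta (theta_invpow theta n h)).

Lemma coef_lfactor_gt i : (t < i)%N -> h`_i = 0.
Proof. by move=> ti; rewrite nth_default // size_h. Qed.

Lemma size_hhat : (size hhat <= n.+1)%N.
Proof.
apply: leq_trans (size_poly _ _) _.
by rewrite size_theta_invpow size_lfactor_leq.
Qed.

Lemma size_ainv_lfactor : (size k <= n.+1)%N.
Proof. by rewrite skmulCl size_scale ?invr_eq0 // size_lfactor_leq. Qed.

Lemma iter_coef_hhat i j :
  th n (th j hhat`_i) = if (i <= t)%N then th (j + i) h`_(t - i) else 0.
Proof.
rewrite coef_poly size_theta_invpow size_h ltnS.
case: leqP => _; last by rewrite !iter_rmorph0.
by rewrite coef_theta_invpow -[th j _]iterD iterC iter_theta_invK.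
Qed.

Lemma iter_coef_ainv_lfactor i l : th n (th l k`_i) = th l (h`_i * th i c^-1).
Proof. by rewrite skmulCl coefZ iterC iter_ainv_coef_lfactor. Qed.

Lemma iter_Mtheta_ainv_lfactor (l s : 'I_n) : th n (Mtheta theta n c k l s) =
  (if (l <= s)%N then th l h`_(s - l) / th s c else 0) + th l h`_(s + n - l).
Proof.
rewrite Mtheta_entry ?size_ainv_lfactor // iter_rmorphD iter_rmorphM (fun_if (th n)).
rewrite iter_rmorph0 !iter_coef_ainv_lfactor.
(* [c] is generalized so that [iter_rmorphM] cannot unfold the product [gamma]. *)
move: gamma_neq0; move: c => C C0.
rewrite !iter_rmorphM; congr (_ + _).
  by case: leqP => // ls; rewrite -iterD subnKC // iter_fmorphV.
rewrite -mulrA -!iterD (_ : l + (s + n - l) = n + s)%N; last by have := ltn_ord l; lia.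
by rewrite iter_fmorphV mulVf ?mulr1 // iter_fmorph_eq0.
Qed.

Lemma iter_Mtheta_hhat (j l : 'I_n) : th n (Mtheta theta n a^-1 hhat j l) =
  (if (j <= l <= j + t)%N then th l h`_(j + t - l) else 0) +
  (if (l + n <= j + t)%N then th l h`_(j + t - n - l) / th (j + t - n) c else 0).
Proof.
have jn := ltn_ord j.
rewrite Mtheta_entry ?size_hhat // iter_rmorphD iter_rmorphM (fun_if (th n)).
rewrite iter_rmorph0 !iter_coef_hhat; congr (_ + _).
  case: (leqP j l) => //= jl; rewrite (_ : (l - j <= t) = (l <= j + t))%N; last by lia.
  by case: ifP => // _; rewrite subnKC // (_ : t - (l - j) = j + t - l)%N //; lia.
rewrite (_ : (l + n - j <= t) = (l + n <= j + t))%N; last by lia.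
case: ifP => lt; last by rewrite mul0r.
rewrite (_ : j + (l + n - j) = l + n)%N; last by lia.
rewrite (_ : t - (l + n - j) = j + t - n - l)%N; last by lia.
rewrite iterD [th n (th l _)]iterC -!iter_rmorphM [h`__ * _]mulrC iter_ainv_coef_lfactor.
rewrite iter_rmorphM -iterD (_ : l + (j + t - n - l) = j + t - n)%N; last by lia.
by rewrite iter_fmorphV.
Qed.

Definition col_shift (j : 'I_n) : 'I_n := Ordinal (ltn_pmod (j + t) n_gt0).

Definition col_scale (j : 'I_n) : F :=
  if (j + t < n)%N then th (j + t) (thinv n c) else 1.

Lemma Mtheta_hhat_entry (j l : 'I_n) :
  Mtheta theta n a^-1 hhat j l = Mtheta theta n c k l (col_shift j) * col_scale j.
Proof.
(* [theta^n] cancels the [theta^-n] hidden in [hhat] and in [col_scale]. *)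
apply: (@iter_fmorph_inj _ theta n).
rewrite iter_rmorphM iter_Mtheta_hhat iter_Mtheta_ainv_lfactor /col_scale /=.
have ln := ltn_ord l; have jn := ltn_ord j.
have tn := size_lfactor_leq; rewrite size_h in tn.
case: (ltnP (j + t) n) => jt.
  rewrite modn_small // iterC iter_theta_invK (_ : (l + n <= j + t) = false)%N; last by lia.
  rewrite (@coef_lfactor_gt (j + t + n - l)) ?iter_rmorph0 ?addr0; last by lia.
  case: (leqP l (j + t)) => /= lt; rewrite ?andbT ?andbF ?mul0r //.
  case: (leqP j l) => //= jl; first by rewrite divfK // iter_fmorph_eq0 gamma_neq0.
  by rewrite coef_lfactor_gt ?iter_rmorph0 ?mul0r //; lia.
have -> : ((j + t) %% n = j + t - n)%N.
  by rewrite -{1}(subnK jt) modnDr modn_small //; lia.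
rewrite iter_rmorph1 mulr1 addrC.
rewrite (_ : (l + n <= j + t) = (l <= j + t - n))%N; last by lia.
congr (_ + _); rewrite (_ : j + t - n + n - l = j + t - l)%N; last by lia.
case: (leqP j l) => /= jl; first by rewrite ifT //; lia.
by rewrite coef_lfactor_gt ?iter_rmorph0 //; lia.
Qed.

Lemma trmx_Mtheta_hhat : (Mtheta theta n a^-1 hhat)^T =
  colsub col_shift (Mtheta theta n c k) *m diag_mx (\row_j col_scale j).
Proof.
apply/matrixP => l j; rewrite mul_mx_diag [LHS]mxE Mtheta_hhat_entry [RHS]mxE.
by rewrite [X in _ = X * _]mxE [X in _ = _ * X]mxE.
Qed.

Lemma Mtheta_rfactor_mul_trmx_eq0 :
  Mtheta theta n a g *m (Mtheta theta n a^-1 hhat)^T = 0.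
Proof.
rewrite trmx_Mtheta_hhat mulmxA mulmx_colsub Mtheta_rfactor_mul_eq0.
by apply/matrixP => i j; rewrite mul_mx_diag !mxE mul0r.
Qed.

End Reversal.

End Factorization.

End SkewPolynomials.

Unset Implicit Arguments.
Set Strict Implicit.

Theorem theorem5p8 (F : finFieldType) (theta : {rmorphism F -> F}) (n : nat)
  (a : F) (g h : {poly F}) :
  a != 0 ->
  'X^n - a%:P = skmul theta h g ->
  let c := gamma theta n a g in
  let hhat := rho_l theta (theta_invpow theta n h) in
  Mtheta theta n a g *m Mtheta theta n c (skmul theta (a^-1)%:P h)
    = Mtheta theta n a g *m (Mtheta theta n a^-1 hhat)^T
  /\ Mtheta theta n a g *m (Mtheta theta n a^-1 hhat)^T = 0.
Proof.
move=> a0; case: n => [|n] hg c hhat; first by split; apply/matrixP => -[].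
have n_gt0 : (0 < n.+1)%N by [].
have size_h : size h = (size h).-1.+1.
  by rewrite prednK // size_poly_gt0 (lfactor_neq0 n_gt0 hg).
by rewrite Mtheta_rfactor_mul_eq0 // (Mtheta_rfactor_mul_trmx_eq0 n_gt0 a0 hg size_h).
Qed.
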